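(* Let $\varepsilon\in[0,1)$ and let $\rho',\tau'\in\mathcal{D}(P')$ be density operators. Let $\mathcal{P},\mathcal{E}\subseteq\mathcal{D}(P)$ satisfy $\operatorname{conv}(\mathcal{P})\cap\operatorname{aff}(\mathcal{E})\neq\emptyset$. Then there exists a linear map $\mathcal{L}$ from operators on $P$ to operators on $P'$ such that, for every $\rho\in\mathcal{P}$ and every $\tau\in\mathcal{E}$, $T(\mathcal{L}(\rho),\rho')\le\varepsilon$ and $\mathcal{L}(\tau)=\tau'$ (i.e. the conversion $(\mathcal{P},\mathcal{E})\xrightarrow{\mathcal{L},\varepsilon}(\rho',\tau')$ is achievable by some Gibbs-preserving linear map) if and only if $\varepsilon\ge T(\rho',\tau')$.
   Context: All Hilbert spaces are finite-dimensional; $\mathcal{D}(P)$ is the set of density operators on system $P$. The trace distance is $T(X,Y)=\tfrac12\|X-Y\|_1$. $\operatorname{conv}(\mathcal{P})$ is the convex hull and $\operatorname{aff}(\mathcal{E})=\{\sum_i a_i\tau_i:\tau_i\in\mathcal{E},a_i\in\mathbb{R},\sum_i a_i=1\}$ the affine hull. An uncertain athermal state is a pair of sets $(\mathcal{P},\mathcal{E})$ of candidate nonequilibrium and equilibrium (Gibbs) states. For a map $\mathcal{F}$, the conversion $(\mathcal{P},\mathcal{E})\xrightarrow{\mathcal{F},\varepsilon}(\mathcal{P}',\mathcal{E}')$ means: for every $(\rho,\tau)\in\mathcal{P}\times\mathcal{E}$ there exists $(\rho',\tau')\in\mathcal{P}'\times\mathcal{E}'$ with $T(\mathcal{F}(\rho),\rho')\le\varepsilon$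 and $\mathcal{F}(\tau)=\tau'$; singleton sets are identified with their element. The class GPL (Gibbs-preserving linear maps) consists of all linear maps sending the input Gibbs state to the output Gibbs state; in this framework that requirement is precisely the condition $\mathcal{F}(\tau)=\tau'$ in the conversion. *)

(* Complex scalars: an arbitrary numClosedFieldType C
   (e.g. the complex numbers R[i] over a real closed field, or algC). *)
From HB Require Import structures.
From mathcomp Require Import all_boot all_order all_algebra.
From Stdlib Require Import ClassicalEpsilon.
Set Implicit Arguments. Unset Strict Implicit. Unset Printing Implicit Defensive.
Import Order.TTheory GRing.Theory Num.Theory.
Local Open Scope ring_scope.

Section Quantum.
Variable C : numClosedFieldType.

Definition adj (m n : nat) (A : 'M[C]_(m, n)) : 'M[C]_(n, m) :=
  (map_mx (fun z => z^*) A)^T.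

Definition psd (n : nat) (A : 'M[C]_n) : Prop :=
  adj A = A /\ forall v : 'cV[C]_n, 0 <= (adj v *m A *m v) 0 0.

Definition density (n : nat) (A : 'M[C]_n) : Prop := psd A /\ \tr A = 1.

Definition unitary (n : nat) (U : 'M[C]_n) : Prop := U *m adj U = 1%:M.

Definition is_svd (n : nat) (A : 'M[C]_n) (s : 'rV[C]_n) : Prop :=
  (forall i, 0 <= s 0 i) /\
  exists U V : 'M[C]_n, unitary U /\ unitary V /\ A = U *m diag_mx s *m adj V.

(* trace norm ||A||_1 = sum of the singular values of A
   (singular values exist and are unique up to permutation) *)
Definition trnorm (n : nat) (A : 'M[C]_n) : C :=
  let s := epsilon (inhabits (0 : 'rV[C]_n)) (is_svd A) in \sum_i s 0 i.

Definition tdist (n : nat) (X Y : 'M[C]_n) : C := trnorm (X - Y) / 2.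

Definition conv_hull (n : nat) (S : 'M[C]_n -> Prop) (X : 'M[C]_n) : Prop :=
  exists (k : nat) (w : 'I_k -> C) (x : 'I_k -> 'M[C]_n),
    (forall i, 0 <= w i) /\ \sum_i w i = 1 /\ (forall i, S (x i)) /\
    X = \sum_i w i *: x i.

Definition aff_hull (n : nat) (S : 'M[C]_n -> Prop) (X : 'M[C]_n) : Prop :=
  exists (k : nat) (a : 'I_k -> C) (x : 'I_k -> 'M[C]_n),
    (forall i, a i \is Num.real) /\ \sum_i a i = 1 /\ (forall i, S (x i)) /\
    X = \sum_i a i *: x i.

End Quantum.

From HB Require Import structures.
From mathcomp Require Import all_boot all_order all_algebra.
From Stdlib Require Import ClassicalEpsilon.
Set Implicit Arguments. Unset Strict Implicit. Unset Printing Implicit Defensive.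
Import Order.TTheory GRing.Theory Num.Theory.
Local Open Scope ring_scope.
Local Open Scope sesquilinear_scope.

(* The trace norm is variational: ||A||_1 is the maximum over unitaries W of
   Re tr(W A), attained at W = V U^* for a singular value decomposition
   A = U diag(s) V^* (whose existence must be proved, trnorm being defined by
   choice).  Hence ||.||_1 is convex and invariant under A |-> -A.
   A linear L sending every state of E to tau' sends their affine hull to tau';
   so for X = sum_i w_i rho_i in conv(P) /\ aff(E),
   T(tau', rho') = T(L X, rho') <= sum_i w_i T(L rho_i, rho') <= eps.
   Conversely X |-> tr(X) tau' is linear, maps every state to tau' and achieves
   distance exactly T(tau', rho'). *)

Section TraceNorm.
Variable C : numClosedFieldType.

Lemma adjE m n (A : 'M[C]_(m, n)) : adj A = A ^t*.
Proof. by rewrite /adj map_trmx. Qed.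

Lemma unitaryE n (U : 'M[C]_n) : unitary U <-> U \is unitarymx.
Proof. by rewrite /unitary adjE; split => [?|/unitarymxP //]; apply/unitarymxP. Qed.

Lemma mulmx_tC_diag m n (M : 'M[C]_(m, n)) i :
  (M *m M^t*) i i = \sum_j M i j * (M i j)^*.
Proof. by rewrite mxE; apply: eq_bigr => j _; rewrite !mxE. Qed.

Lemma mulmx_tC_diag_ge0 m n (M : 'M[C]_(m, n)) i : 0 <= (M *m M^t*) i i.
Proof. by rewrite mulmx_tC_diag sumr_ge0 // => j _; rewrite mul_conjC_ge0. Qed.

Lemma mulmx_tC_diag_eq0 m n (M : 'M[C]_(m, n)) i j :
  (M *m M^t*) i i = 0 -> M i j = 0.
Proof.
rewrite mulmx_tC_diag => /psumr_eq0P Mi0.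
by apply/eqP; rewrite -mul_conjC_eq0 Mi0 // => k _; rewrite mul_conjC_ge0.
Qed.

Definition selmx n (T : {set 'I_n}) : 'M[C]_(n, #|T|) :=
  \matrix_(i, j) (i == enum_val j)%:R.

Lemma sum_eq_enum_val n (T : {set 'I_n}) i :
  \sum_(j < #|T|) ((i == enum_val j)%:R : C) = (i \in T)%:R.
Proof.
have [iT|iNT] := boolP (i \in T); last first.
  by rewrite big1 // => j _; case: eqP => // ij; rewrite ij enum_valP in iNT.
rewrite (bigD1 (enum_rank_in iT i)) //= enum_rankK_in // eqxx big1 ?addr0 //.
move=> j jne; case: eqP => // ij; move: jne.
by rewrite {2}ij enum_valK_in eqxx.
Qed.

Lemma selmx_mulC n (T : {set 'I_n}) :
  selmx T *m (selmx T)^t* = diag_mx (\row_i (i \in T)%:R).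
Proof.
apply/matrixP => i i'; rewrite !mxE.
have [<-|ii'] := eqVneq i i'.
  rewrite mulr1n -(sum_eq_enum_val T i); apply: eq_bigr => j _.
  by rewrite !mxE conjC_nat -natrM mulnb andbb.
rewrite mulr0n big1 // => j _; rewrite !mxE conjC_nat -natrM mulnb.
by case: (eqVneq i (enum_val j)) => // <-; rewrite eq_sym (negbTE ii').
Qed.

Lemma row_selmx_notin n (T : {set 'I_n}) i : i \notin T -> row i (selmx T) = 0.
Proof.
move=> iNT; apply/rowP => j; rewrite !mxE.
by case: eqP => // ij; rewrite ij enum_valP in iNT.
Qed.

Lemma pid_unitarymx k r : (k <= r)%N -> pid_mx k \is @unitarymx C k r.
Proof.
move=> le_kr; apply/unitarymxP.
by rewrite tr_pid_mx map_pid_mx mul_pid_mx minnn (minn_idPr le_kr) pid_mx_1.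
Qed.

Lemma ortho_unitarymx_exists k p n (M : 'M[C]_(p, n)) : (k + \rank M <= n)%N ->
  exists2 Z : 'M[C]_(k, n), Z \is unitarymx & Z *m M^t* = 0.
Proof.
pose K := orthomx Num.Def.conjC (hermitian1mx n) M.
have Z0u : schmidt (row_base K) \is unitarymx by rewrite schmidt_unitarymx ?rank_leq_col.
have Z0K : (schmidt (row_base K) <= K)%MS.
  by rewrite (eqmx_schmidt_free (row_base_free K)) eq_row_base.
move=> le_kn; have le_kK : (k <= \rank K)%N.
  by rewrite rank_ortho leq_subRL ?rank_leq_col // addnC.
exists (pid_mx k *m schmidt (row_base K)).
  by rewrite mul_unitarymx ?pid_unitarymx.
by rewrite -mulmxA (orthomx1P Z0K) mulmx0.
Qed.

Lemma unitarymx_completion n (N0 : 'M[C]_n) (T : {set 'I_n}) :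
  N0 *m N0^t* = diag_mx (\row_i (i \in T)%:R) ->
  exists2 N : 'M[C]_n, N \is unitarymx & forall i, i \in T -> row i N = row i N0.
Proof.
move=> N0N0; have N0T : N0 = selmx T *m ((selmx T)^t* *m N0).
  apply/matrixP => i j; rewrite mulmxA selmx_mulC mul_diag_mx !mxE.
  have [_|iNT] := boolP (i \in T); first by rewrite mul1r.
  by rewrite mul0r; apply: mulmx_tC_diag_eq0; rewrite N0N0 !mxE eqxx (negbTE iNT).
have rkN0 : (#|~: T| + \rank N0 <= n)%N.
  have rkT : (\rank N0 <= #|T|)%N.
    by rewrite N0T (leq_trans (mxrankM_maxl _ _)) ?rank_leq_col.
  by rewrite addnC -[X in (_ <= X)%N](card_ord n) -(cardsC T) leq_add2r.
have [Z Zu ZN0] := ortho_unitarymx_exists rkN0.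
pose Y := selmx (~: T) *m Z.
have YY : Y *m Y^t* = diag_mx (\row_i (i \in ~: T)%:R).
  by rewrite trmx_mul map_mxM mulmxA mulmxtVK // selmx_mulC.
have YN0 : Y *m N0^t* = 0 by rewrite -mulmxA ZN0 mulmx0.
have N0Y : N0 *m Y^t* = 0.
  by rewrite -[N0]trmxCK -map_mxM -trmx_mul YN0 trmx0 map_mx0.
exists (N0 + Y).
  apply/unitarymxP; rewrite linearD map_mxD mulmxDl !mulmxDr N0N0 N0Y YN0 YY.
  rewrite addr0 add0r; apply/matrixP => i j; rewrite !mxE inE.
  by case: (i \in T); rewrite /= mul0rn ?addr0 ?add0r.
by move=> i iT; rewrite linearD /= row_mul row_selmx_notin ?mul0mx ?addr0 // inE iT.
Qed.

Lemma diag_gram_factor n (B : 'M[C]_n) (s : 'rV[C]_n) :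
  (forall i, 0 <= s 0 i) -> B *m B^t* = diag_mx (\row_i (s 0 i ^+ 2)) ->
  exists2 N : 'M[C]_n, N \is unitarymx & B = diag_mx s *m N.
Proof.
(* Normalising the nonzero rows of B gives a partial isometry N0 with B = diag(s) N0. *)
move=> s_ge0 BB; pose T := [set i | s 0 i != 0].
pose N0 := diag_mx (\row_i (s 0 i)^-1) *m B.
have N0N0 : N0 *m N0^t* = diag_mx (\row_i (i \in T)%:R).
  rewrite trmx_mul map_mxM tr_diag_mx map_diag_mx mulmxA -(mulmxA _ B) BB.
  rewrite !mulmx_diag; congr diag_mx; apply/rowP => i; rewrite !mxE inE.
  rewrite fmorphV /= conj_Creal ?ger0_real //.
  have [->|si0] := eqVneq (s 0 i) 0; first by rewrite invr0 !mul0r.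
  by rewrite expr2 mulrA mulVf // mul1r divff.
have [N Nu NN0] := unitarymx_completion N0N0.
exists N => //; apply/matrixP => i j; rewrite mul_diag_mx mxE.
have [si0|si0] := eqVneq (s 0 i) 0.
  rewrite si0 mul0r; apply: mulmx_tC_diag_eq0.
  by rewrite BB !mxE eqxx si0 expr0n.
have iT : i \in T by rewrite inE.
have /rowP/(_ j) := NN0 i iT; rewrite mxE [RHS]mxE => ->.
by rewrite /N0 mul_diag_mx !mxE mulrA divff // mul1r.
Qed.

Lemma is_svd_exists n (A : 'M[C]_n) : exists s, is_svd A s.
Proof.
(* With A A^* = P^* diag(d) P, the rows of B = P A are orthogonal of squared norms d. *)
have AAn : A *m A^t* \is normalmx.
  by apply/normalmxP; rewrite trmx_mul map_mxM trmxCK.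
have Pu := spectral_unitarymx (A *m A^t*).
have /orthomx_spectralP := AAn; rewrite invmx_unitary //.
set P := spectralmx _; set d := spectral_diag _ => AA.
pose B := P *m A.
have BB : B *m B^t* = diag_mx d.
  rewrite trmx_mul map_mxM mulmxA -(mulmxA P) AA !mulmxA (unitarymxP Pu).
  by rewrite mul1mx mulmxtVK.
have d_ge0 i : 0 <= d 0 i.
  by have := mulmx_tC_diag_ge0 B i; rewrite BB mxE eqxx mulr1n.
pose s := \row_i sqrtC (d 0 i).
have s_ge0 i : 0 <= s 0 i by rewrite mxE sqrtC_ge0.
have [|N Nu BN] := @diag_gram_factor _ B s s_ge0.
  by rewrite BB; congr diag_mx; apply/rowP => i; rewrite !mxE sqrtCK.
exists s; split => //; exists (P^t*), (N^t*).
rewrite !unitaryE !trmxC_unitary adjE trmxCK -mulmxA -BN mulmxA.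
by split=> //; split=> //; rewrite -[P^t*]mul1mx mulmxKtV // mul1mx.
Qed.

Lemma trnorm_svd n (A : 'M[C]_n) : exists2 s, is_svd A s & trnorm A = \sum_i s 0 i.
Proof.
have [s sA] := is_svd_exists A.
by exists (epsilon (inhabits 0) (is_svd A)) => //; apply: epsilon_spec; exists s.
Qed.

Lemma unitarymx_diag_le1 n (M : 'M[C]_n) i : M \is unitarymx -> `|M i i| <= 1.
Proof.
move=> /unitarymxP MM; have := mulmx_tC_diag M i.
rewrite MM mxE eqxx mulr1n (bigD1 i) //= -normCK => E.
rewrite -(@ler_pXn2r _ 2) ?nnegrE // expr1n E lerDl.
by rewrite sumr_ge0 // => j _; rewrite mul_conjC_ge0.
Qed.

Lemma Re_tr_unitary_diag_le n (M : 'M[C]_n) (s : 'rV[C]_n) :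
  M \is unitarymx -> (forall i, 0 <= s 0 i) ->
  'Re (\tr (M *m diag_mx s)) <= \sum_i s 0 i.
Proof.
move=> Mu s_ge0; rewrite /mxtrace raddf_sum /=; apply: ler_sum => i _.
rewrite mul_mx_diag mxE ReMr ?ger0_real //.
apply: (le_trans (y := `|M i i| * s 0 i)).
  by rewrite ler_wpM2r // (leif_Re_Creal _).1.
by rewrite ler_piMl // unitarymx_diag_le1.
Qed.

Lemma Re_tr_le_trnorm n (W A : 'M[C]_n) :
  W \is unitarymx -> 'Re (\tr (W *m A)) <= trnorm A.
Proof.
move=> Wu; have [s [s_ge0 [U [V [/unitaryE Uu [/unitaryE Vu ->]]]]] ->] := trnorm_svd A.
rewrite adjE !mulmxA mxtrace_mulC !mulmxA Re_tr_unitary_diag_le //.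
by rewrite !mul_unitarymx // trmxC_unitary.
Qed.

Lemma trnorm_Re_tr n (A : 'M[C]_n) :
  exists2 W, W \is unitarymx & 'Re (\tr (W *m A)) = trnorm A.
Proof.
have [s [s_ge0 [U [V [/unitaryE Uu [/unitaryE Vu ->]]]]] ->] := trnorm_svd A.
exists (V *m U^t*); first by rewrite mul_unitarymx // trmxC_unitary.
rewrite adjE !mulmxA (mulmxKtV V Uu) // mxtrace_mulC mulmxA -[V^t*]mul1mx.
rewrite (mulmxKtV _ Vu) // mul1mx mxtrace_diag.
by apply/Creal_ReP/ger0_real/sumr_ge0.
Qed.

Lemma trnormN n (A : 'M[C]_n) : trnorm (- A) = trnorm A.
Proof.
suff trnormN_le (B : 'M[C]_n) : trnorm (- B) <= trnorm B.
  by apply/le_anti/andP; split; [|rewrite -{1}[A]opprK]; apply: trnormN_le.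
have [W Wu <-] := trnorm_Re_tr (- B); rewrite mulmxN -mulNmx.
apply: Re_tr_le_trnorm; apply/unitarymxP.
by rewrite linearN map_mxN mulNmx mulmxN opprK (unitarymxP Wu).
Qed.

Lemma trnorm_sum_le n k (w : 'I_k -> C) (B : 'I_k -> 'M[C]_n) :
  (forall i, 0 <= w i) -> trnorm (\sum_i w i *: B i) <= \sum_i w i * trnorm (B i).
Proof.
move=> w_ge0; have [W Wu <-] := trnorm_Re_tr (\sum_i w i *: B i).
rewrite mulmx_sumr linear_sum raddf_sum /=; apply: ler_sum => i _.
by rewrite -scalemxAr mxtraceZ ReMl ?ger0_real // ler_wpM2l // Re_tr_le_trnorm.
Qed.

Lemma tdistC n (X Y : 'M[C]_n) : tdist X Y = tdist Y X.
Proof. by rewrite /tdist -opprB trnormN. Qed.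

Lemma tdist_sum_le n k (w : 'I_k -> C) (X : 'I_k -> 'M[C]_n) (Y : 'M[C]_n) :
  (forall i, 0 <= w i) -> \sum_i w i = 1 ->
  tdist (\sum_i w i *: X i) Y <= \sum_i w i * tdist (X i) Y.
Proof.
move=> w_ge0 w1; rewrite /tdist.
have -> : \sum_i w i *: X i - Y = \sum_i w i *: (X i - Y).
  rewrite -[Y in LHS]scale1r -w1 scaler_suml -sumrB.
  by apply: eq_bigr => i _; rewrite scalerBr.
rewrite (eq_bigr (fun i => w i * trnorm (X i - Y) / 2)) => [|i _]; last first.
  exact: mulrA.
by rewrite -mulr_suml ler_wpM2r ?invr_ge0 ?ler0n ?trnorm_sum_le.
Qed.

Lemma conv_hull_inhabited n (S : 'M[C]_n -> Prop) X : conv_hull S X -> exists x, S x.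
Proof.
case=> [[|k] [w [x [_ [w1 [Sx _]]]]]]; last by exists (x ord0).
by move: w1; rewrite big_ord0 => /eqP; rewrite eq_sym oner_eq0.
Qed.

Lemma aff_hull_inhabited n (S : 'M[C]_n -> Prop) X : aff_hull S X -> exists x, S x.
Proof.
case=> [[|k] [a [x [_ [a1 [Sx _]]]]]]; last by exists (x ord0).
by move: a1; rewrite big_ord0 => /eqP; rewrite eq_sym oner_eq0.
Qed.

Lemma linear_aff_hull_const n m (L : {linear 'M[C]_n -> 'M[C]_m}) E t X :
  (forall tau, E tau -> L tau = t) -> aff_hull E X -> L X = t.
Proof.
move=> LE [k [a [x [_ [a1 [Ex ->]]]]]].
rewrite linear_sum (eq_bigr (fun i => a i *: t)) => [|i _].
  by rewrite -scaler_suml a1 scale1r.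
by rewrite linearZ /= LE.
Qed.

Lemma tdist_linear_conv_hull_le n m (L : {linear 'M[C]_n -> 'M[C]_m}) P r e X :
  (forall rho, P rho -> tdist (L rho) r <= e) -> conv_hull P X -> tdist (L X) r <= e.
Proof.
move=> LP [k [w [x [w_ge0 [w1 [Px ->]]]]]].
rewrite linear_sum (eq_bigr (fun i => w i *: L (x i))) => [|i _]; last first.
  by rewrite linearZ.
apply: le_trans (tdist_sum_le _ _ w_ge0 w1) _.
rewrite -[e]mul1r -w1 mulr_suml; apply: ler_sum => i _.
by rewrite ler_wpM2l ?LP.
Qed.

Definition trace_replace n m (t : 'M[C]_m) (X : 'M[C]_n) := \tr X *: t.

Lemma trace_replace_is_linear n m (t : 'M[C]_m) : linear (@trace_replace n m t).
Proof. by move=> a X Y; rewrite /trace_replace linearP scalerDl scalerA. Qed.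

Lemma trace_replace_density n m (t : 'M[C]_m) (X : 'M[C]_n) :
  density X -> trace_replace t X = t.
Proof. by case=> _ trX; rewrite /trace_replace trX scale1r. Qed.
End TraceNorm.

HB.instance Definition _ (C : numClosedFieldType) n m (t : 'M[C]_m) :=
  GRing.isLinear.Build C 'M[C]_n 'M[C]_m _ (@trace_replace C n m t)
    (@trace_replace_is_linear C n m t).

Theorem theorem1 (C : numClosedFieldType) (n m : nat) (eps : C)
  (rho' tau' : 'M[C]_m) (Pset Eset : 'M[C]_n -> Prop) :
  0 <= eps -> eps < 1 ->
  density rho' -> density tau' ->
  (forall rho, Pset rho -> density rho) ->
  (forall tau, Eset tau -> density tau) ->
  (exists X, conv_hull Pset X /\ aff_hull Eset X) ->
  ((exists L : {linear 'M[C]_n -> 'M[C]_m},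
      forall rho tau, Pset rho -> Eset tau ->
        tdist (L rho) rho' <= eps /\ L tau = tau')
   <-> tdist rho' tau' <= eps).
Proof.
move=> _ _ _ _ dP dE [X [PX EX]]; split.
  case=> L HL; have [rho Prho] := conv_hull_inhabited PX.
  have [tau Etau] := aff_hull_inhabited EX.
  have LX : L X = tau'.
    by apply: linear_aff_hull_const EX => t Et; case: (HL rho t Prho Et).
  rewrite tdistC -LX; apply: tdist_linear_conv_hull_le PX => r Pr.
  by case: (HL r tau Pr Etau).
move=> le_eps; exists (trace_replace tau' : {linear 'M[C]_n -> 'M[C]_m}).
move=> rho tau Prho Etau /=.
have [dr dt] := (dP rho Prho, dE tau Etau).
by rewrite !trace_replace_density // tdistC.
Qed.
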